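(* Let $\mathbb{K}$ be a field of characteristic $0$, $R=\mathbb{K}[x_1,\dots,x_n]$, let $P\subseteq R$ be a maximal ideal such that $P\neq\mathfrak m_q$ for every $q\in\mathbb{K}^n$, and let $I\subseteq R$ be a zero-dimensional $P$-primary ideal. Let $p=(\bar x_1,\dots,\bar x_n)\in\kappa(P)^n$ (images of the variables in $\kappa(P)=R/P$), a point at which all elements of $P$ vanish, and let $\mathfrak m_p=(x_1-p_1,\dots,x_n-p_n)\subseteq\kappa(P)[x_1,\dots,x_n]$. Let $I_{\kappa(P)}$ be the extension of $I$ to $\kappa(P)[x_1,\dots,x_n]$. Then the $\kappa(P)$-vector spaces $D_{\mathfrak m_p}[I_{\kappa(P)}]$ and $D_P[I]$ are equal.
   Context: For $q\in\mathbb{K}^n$, $\mathfrak m_q$ is the maximal ideal of $q$. Let $W_{\kappa(P)}$ denote the space of operators $D=\sum_\alpha c_\alpha\partial^\alpha$ with $c_\alpha\in\kappa(P)$ (finite sums, $\partial^\alpha=\partial_1^{\alpha_1}\cdots\partial_n^{\alpha_n}$, $\partial_i=\partial/\partial x_i$). For $f\in R$, $\langle D,f\rangle_{\kappa(P)}:=\sum_\alpha c_\alpha\,\overline{\partial^\alpha f}\in\kappa(P)$ (image modulo $P$), and $D_P[I]:=\{D\in W_{\kappa(P)}:\langle D,f\rangle_{\kappa(P)}=0\ \forall f\in I\}$. For $f\in\kappa(P)[x_1,\dots,x_n]$, $\langle D,f\rangle_{\kappa(\mathfrak m_p)}:=\sum_\alpha c_\alpha(\partial^\alpha f)(p)\in\kappa(P)$,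 and for an ideal $J\subseteq\kappa(P)[x_1,\dots,x_n]$, $D_{\mathfrak m_p}[J]:=\{D\in W_{\kappa(P)}:\langle D,f\rangle_{\kappa(\mathfrak m_p)}=0\ \forall f\in J\}$. *)

From HB Require Import structures.
From mathcomp Require Import all_boot all_order all_algebra.
From mathcomp Require Import mpoly.
Set Implicit Arguments. Unset Strict Implicit. Unset Printing Implicit Defensive.
Import GRing.Theory.
Local Open Scope ring_scope.

Section Ideals.
Variable R : comRingType.

Definition is_ideal (I : R -> Prop) : Prop :=
  [/\ I 0, (forall a b, I a -> I b -> I (a + b)) & (forall r a, I a -> I (r * a))].

Definition is_proper (I : R -> Prop) : Prop := ~ I 1.

Definition is_prime_ideal (Q : R -> Prop) : Prop :=
  [/\ is_ideal Q, is_proper Q & forall a b, Q (a * b) -> Q a \/ Q b].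

Definition is_maximal_ideal (M : R -> Prop) : Prop :=
  [/\ is_ideal M, is_proper M &
      forall J, is_ideal J -> (forall f, M f -> J f) ->
        (forall f, J f <-> M f) \/ (forall f, J f)].

Definition is_primary_to (I P : R -> Prop) : Prop :=
  [/\ is_ideal I, is_proper I,
      (forall a b, I (a * b) -> ~ I a -> exists k, I (b ^+ k)) &
      (forall f, P f <-> exists k, I (f ^+ k))].

Definition zero_dimensional (I : R -> Prop) : Prop :=
  forall Q, is_prime_ideal Q -> (forall f, I f -> Q f) -> is_maximal_ideal Q.

Definition gen_ideal (A : R -> Prop) : R -> Prop :=
  fun f => exists m (g a : 'I_m -> R), (forall j, A (a j)) /\ f = \sum_(j < m) g j * a j.
End Ideals.

Definition max_ideal_at (K : comRingType) (n : nat) (q : 'I_n -> K)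
  : {mpoly K[n]} -> Prop :=
  gen_ideal (fun g => exists i : 'I_n, g = 'X_i - (q i)%:MP).

Definition ext_ideal (R S : comRingType) (phi : R -> S) (I : R -> Prop) : S -> Prop :=
  gen_ideal (fun g => exists h, I h /\ g = phi h).

(* A differential operator D = sum_alpha c_alpha d^alpha with coefficients
   in L is encoded by its finitely supported coefficient map alpha |-> c_alpha,
   stored as an element of {mpoly L[n]} (c_alpha = D@_alpha). *)
Definition diffop (L : ringType) (n : nat) := {mpoly L[n]}.

Definition pair_P (K L : comRingType) (n : nat) (pi : {mpoly K[n]} -> L)
  (D : diffop L n) (f : {mpoly K[n]}) : L :=
  \sum_(a <- msupp D) D@_a * pi (f^`M[a]).

Definition pair_pt (L : comRingType) (n : nat) (p : 'I_n -> L)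
  (D : diffop L n) (f : {mpoly L[n]}) : L :=
  \sum_(a <- msupp D) D@_a * (f^`M[a]).@[p].

From HB Require Import structures.
From mathcomp Require Import all_boot all_order all_algebra.
From mathcomp Require Import mpoly.
Import GRing.Theory.
Local Open Scope ring_scope.

(* Write iota := pi \o (_%:MP) for the coefficient map K -> kappa(P).  Every
   ring morphism pi out of K[x] is evaluation of the iota-image at
   p = (pi x_1, ..., pi x_n), and differentiation commutes with coefficient
   maps, so <D, g>_P = <D, g^iota>_{m_p} for every g.  This gives one
   inclusion at once, since g^iota lies in I_kappa(P) for g in I.  Conversely
   I_kappa(P) is spanned over kappa(P) by the x^m * g^iota = (x^m g)^iota with
   g in I, and x^m g is again in I. *)

Lemma mderivm_map (n : nat) (R S : nzRingType) (f : {additive R -> S})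
    (g : {mpoly R[n]}) m :
  (map_mpoly f g)^`M[m] = map_mpoly f (g^`M[m]).
Proof.
apply/mpolyP=> m'.
by rewrite mcoeff_map_mpoly !mcoeff_mderivm mcoeff_map_mpoly raddfMn.
Qed.

Lemma rmorph_mpolyE (n : nat) (R : nzRingType) (S : comNzRingType)
    (pi : {rmorphism {mpoly R[n]} -> S}) (g : {mpoly R[n]}) :
  pi g = (map_mpoly (pi \o @mpolyC n R) g).@[fun i => pi 'X_i].
Proof.
rewrite (mpolyE g) (raddf_sum pi) (raddf_sum (map_mpoly _)) raddf_sum.
apply: eq_bigr => m _ /=.
rewrite map_mpolyZ map_mpolyX mevalZ mevalX -mul_mpolyC rmorphM mpolyXE_id.
by rewrite rmorph_prod; congr (_ * _); apply: eq_bigr => i _; rewrite rmorphXn.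
Qed.

Lemma mem_gen_ideal (R : comNzRingType) (A : R -> Prop) f : A f -> gen_ideal A f.
Proof.
by move=> Af; exists 1%N, (fun=> 1), (fun=> f); rewrite big_ord1 mul1r.
Qed.

Section PointPairing.
Variables (n : nat) (L : comNzRingType) (p : 'I_n -> L) (D : diffop L n).

Lemma pair_pt_sum (I : Type) (r : seq I) (F : I -> {mpoly L[n]}) :
  pair_pt p D (\sum_(i <- r) F i) = \sum_(i <- r) pair_pt p D (F i).
Proof.
rewrite /pair_pt exchange_big; apply: eq_bigr => a _.
by rewrite !raddf_sum mulr_sumr.
Qed.

Lemma pair_ptZ c f : pair_pt p D (c *: f) = c * pair_pt p D f.
Proof.
rewrite /pair_pt mulr_sumr; apply: eq_bigr => a _.
by rewrite mderivmZ mevalZ mulrCA.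
Qed.

Lemma pair_pt_gen_ideal (A : {mpoly L[n]} -> Prop) :
  (forall a m, A a -> pair_pt p D ('X_[m] * a) = 0) ->
  forall f, gen_ideal A f -> pair_pt p D f = 0.
Proof.
move=> DA _ [k [g [a [Aa ->]]]].
rewrite pair_pt_sum big1 // => j _.
rewrite (mpolyE (g j)) mulr_suml pair_pt_sum big1 // => m _.
by rewrite -scalerAl pair_ptZ DA ?mulr0.
Qed.

End PointPairing.

Lemma pair_P_pair_pt (K L : comNzRingType) (n : nat)
    (pi : {rmorphism {mpoly K[n]} -> L}) (D : diffop L n) (g : {mpoly K[n]}) :
  pair_P pi D g
  = pair_pt (fun i => pi 'X_i) D (map_mpoly (pi \o @mpolyC n K) g).
Proof.
apply: eq_bigr => a _.
by rewrite mderivm_map -rmorph_mpolyE.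
Qed.

Theorem lemma3p8 (K : fieldType) (n : nat)
  (charK0 : [pchar K] =i pred0)
  (P I : {mpoly K[n]} -> Prop)
  (hP : is_maximal_ideal P)
  (hPnot : forall q : 'I_n -> K, ~ (forall f, P f <-> max_ideal_at q f))
  (hI0 : zero_dimensional I) (hIP : is_primary_to I P)
  (L : fieldType) (pi : {rmorphism {mpoly K[n]} -> L})
  (pi_surj : forall y : L, exists f, pi f = y)
  (pi_ker : forall f, pi f = 0 <-> P f) :
  let p : 'I_n -> L := fun i => pi 'X_i in
  let iota : K -> L := fun c => pi c%:MP in
  let IL := ext_ideal (map_mpoly iota) I in
  forall D : diffop L n,
    (forall f, IL f -> pair_pt p D f = 0) <->
    (forall f, I f -> pair_P pi D f = 0).
Proof.
move=> p iota IL D; have [[_ _ I_mul] _ _ _] := hIP.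
split=> [DIL f If | DI].
  by rewrite pair_P_pair_pt; apply/DIL/mem_gen_ideal; exists f.
apply: pair_pt_gen_ideal => _ m [h [Ih ->]].
rewrite -(map_mpolyX (pi \o @mpolyC n K)) -rmorphM -pair_P_pair_pt.
exact/DI/I_mul.
Qed.
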